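(* With $\mathbb G$, $\mathbb G^*$ as below, suppose $\hat x\in\mathrm{Range}_1(\mathbb G^* )$ and there exists $x\in\mathbb G(\hat x)$ with $x_i=x_j$ for some $i,j\in[m]$. Then $\hat x_i=\hat x_j$.
   Context: $D$ finite, $m\ge2$, $\Gamma$ a finite set of cost functions $f:D^n\to\mathbb Q\cup\{\infty\}$ with $\mathrm{dom} f=\{x:f(x)<\infty\}$. Maps $\mathbf g=(g_1,\dots,g_m):D^m\to D^m$ act on $x=(x^1,\dots,x^m)\in[D^n]^m$ coordinatewise; $f^m(x)=\frac1m\sum f(x^i)$. Generalized fractional polymorphism of arity $m\to m$: finitely supported probability distribution $\rho$ on maps with $\sum\rho(\mathbf g)f^m(\mathbf g(x))\le f^m(x)$ for all $f\in\Gamma$, $x\in[\mathrm{dom} f]^m$. For $x\in D^m$ and permutation $\pi$, $x^\pi=(x_{\pi(1)},\dots,x_{\pi(m)})$, $\mathbf g^\pi=(g_{\pi(1)},\dots,g_{\pi(m)})$; $\Omega=\{\mathbf g:\mathbf g^\pi(x)=\mathbf g(x^\pi)\ \forall x,\pi\}$. $\omega$: generalized fractional polymorphism of arity $m\to m$ with support in $\Omega$ that contains the support of every other such. $\mathbb G=\{\mathbf g_k\circ\dots\circ\mathbf g_1:k\ge0,\mathbf g_i\in\mathrm{supp}(\omega)\}$, $E=\{(\mathbf g,\mathbf h\circ\mathbf g):\mathbf g\in\mathbb G,\mathbf h\in\mathrm{supp}(\omega)\}$; $\mathbb G^*$ the union of strongly connected components of $(\mathbb G,E)$ without outgoing edges;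 $\mathrm{Range}_1(\mathbb G^* )=\{\mathbf g(y):\mathbf g\in\mathbb G^*,y\in D^m\}$; $\mathbb G(\hat x)=\{\mathbf g(\hat x):\mathbf g\in\mathbb G\}$. *)

From HB Require Import structures.
From mathcomp Require Import all_boot all_order all_algebra all_fingroup.
From Stdlib Require List.
Set Implicit Arguments. Unset Strict Implicit. Unset Printing Implicit Defensive.
Import Order.TTheory GRing.Theory Num.Theory.
Local Open Scope ring_scope.

(* A cost function f : D^n -> Q u {oo}; [None] encodes oo.  Each function
   carries its own arity n. *)
Record costfun (D : finType) := CostFun {
  cf_arity : nat;
  cf_fun :> {ffun 'I_cf_arity -> D} -> option rat }.

Definition in_dom (D : finType) (f : costfun D) (y : {ffun 'I_(cf_arity f) -> D}) : bool :=
  f y != None.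
Arguments in_dom {D} f y.

Definition oval (o : option rat) : rat := odflt 0 o.

Definition tup (D : finType) (m : nat) := {ffun 'I_m -> D}.
Definition mmap (D : finType) (m : nat) := {ffun tup D m -> tup D m}.

(* coordinatewise application of g to x = (x^1,..,x^m) in [D^n]^m *)
Definition gapp (D : finType) (m n : nat) (g : mmap D m)
    (x : 'I_m -> {ffun 'I_n -> D}) : 'I_m -> {ffun 'I_n -> D} :=
  fun i => [ffun k => g [ffun i' => x i' k] i].

(* f^m(x) = 1/m sum_i f(x^i), used only when all f(x^i) are finite *)
Definition fm (D : finType) (m : nat) (f : costfun D)
    (x : 'I_m -> {ffun 'I_(cf_arity f) -> D}) : rat :=
  (\sum_(i < m) oval (f (x i))) / m%:R.
Arguments fm {D m} f x.

Definition supp (D : finType) (m : nat) (rho : {ffun mmap D m -> rat}) (g : mmap D m) : bool :=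
  0 < rho g.

(* The LHS (a sum over supp rho) is in Q u {oo}; it is finite iff every
   supported g maps x into [dom f]^m. *)
Definition gfp (D : finType) (m : nat) (Gamma : seq (costfun D))
    (rho : {ffun mmap D m -> rat}) : Prop :=
  (forall g, 0 <= rho g) /\ (\sum_g rho g = 1) /\
  forall f, List.In f Gamma ->
  forall x : 'I_m -> {ffun 'I_(cf_arity f) -> D},
    (forall i, in_dom f (x i)) ->
    (forall g, supp rho g -> forall i, in_dom f (gapp g x i)) /\
    \sum_(g | supp rho g) rho g * fm f (gapp g x) <= fm f x.

(* Omega: g^pi(x) = g(x^pi) for all x, pi, where x^pi i = x (pi i) and
   g^pi = (g_{pi 1},..,g_{pi m}) *)
Definition Omega (D : finType) (m : nat) (g : mmap D m) : Prop :=
  forall (x : tup D m) (pi : 'S_m) (i : 'I_m),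
    g x (pi i) = g [ffun j => x (pi j)] i.

Definition is_omega (D : finType) (m : nat) (Gamma : seq (costfun D))
    (omega : {ffun mmap D m -> rat}) : Prop :=
  [/\ gfp Gamma omega,
      (forall g, supp omega g -> Omega g) &
      forall rho, gfp Gamma rho -> (forall g, supp rho g -> Omega g) ->
        forall g, supp rho g -> supp omega g].

Definition idm (D : finType) (m : nat) : mmap D m := [ffun y => y].
Definition compm (D : finType) (m : nat) (h g : mmap D m) : mmap D m :=
  [ffun y => h (g y)].

Inductive inG (D : finType) (m : nat) (omega : {ffun mmap D m -> rat}) : mmap D m -> Prop :=
| inG_id : inG omega (idm D m)
| inG_step g h : inG omega g -> supp omega h -> inG omega (compm h g).

Definition Edge (D : finType) (m : nat) (omega : {ffun mmap D m -> rat})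
    (g g' : mmap D m) : Prop :=
  inG omega g /\ exists h, supp omega h /\ g' = compm h g.

Inductive reach (D : finType) (m : nat) (omega : {ffun mmap D m -> rat}) :
    mmap D m -> mmap D m -> Prop :=
| reach_refl g : reach omega g g
| reach_step g g' g'' : Edge omega g g' -> reach omega g' g'' -> reach omega g g''.

Definition scc (D : finType) (m : nat) (omega : {ffun mmap D m -> rat})
    (g h : mmap D m) : Prop :=
  inG omega h /\ reach omega g h /\ reach omega h g.

(* G-star: union of the SCCs without outgoing edges *)
Definition Gstar (D : finType) (m : nat) (omega : {ffun mmap D m -> rat})
    (g : mmap D m) : Prop :=
  inG omega g /\
  forall h h', scc omega g h -> Edge omega h h' -> scc omega g h'.

Definition Range1 (D : finType) (m : nat) (omega : {ffun mmap D m -> rat})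
    (x : tup D m) : Prop :=
  exists g y, Gstar omega g /\ x = g y.

Definition Gorbit (D : finType) (m : nat) (omega : {ffun mmap D m -> rat})
    (xh x : tup D m) : Prop :=
  exists g, inG omega g /\ x = g xh.

From Pilot Require Import Defs.
From HB Require Import structures.
From mathcomp Require Import all_boot all_order all_algebra all_fingroup.

(* Write xh = g y with g in G*.  For h in G, the map h o g is reachable from g
   in (G, E), so it lies in the sink component of g and reaches g back: g is
   obtained from h o g by composing with maps of supp omega.  Maps in Omega
   commute with the transposition (i j), hence preserve the equality of the
   coordinates i and j; so h (g y) i = h (g y) j forces g y i = g y j. *)

Set Implicit Arguments.
Unset Strict Implicit.
Unset Printing Implicit Defensive.

Section Reachability.
Variables (D : finType) (m : nat) (omega : {ffun mmap D m -> rat}).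

(* Qualified: plain [idm] resolves to the identity morphism of fingroup. *)
Lemma comp1m (g : mmap D m) : compm (Defs.idm D m) g = g.
Proof. by apply/ffunP => y; rewrite !ffunE. Qed.

Lemma compmA (h2 h1 g : mmap D m) :
  compm h2 (compm h1 g) = compm (compm h2 h1) g.
Proof. by apply/ffunP => y; rewrite !ffunE. Qed.

Lemma inG_compm (h g : mmap D m) :
  inG omega h -> inG omega g -> inG omega (compm h g).
Proof.
elim=> [|h1 h2 _ IH suph2] Gg; first by rewrite comp1m.
by rewrite -compmA; apply: inG_step => //; apply: IH.
Qed.

Lemma reach_trans (a b c : mmap D m) :
  reach omega a b -> reach omega b c -> reach omega a c.
Proof. by elim=> [//|x y z Exy _ IH] Hbc; apply: reach_step Exy (IH Hbc). Qed.

Lemma reach_compm (h g : mmap D m) :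
  inG omega h -> inG omega g -> reach omega g (compm h g).
Proof.
elim=> [|h1 h2 Gh1 IH suph2] Gg; first by rewrite comp1m; apply: reach_refl.
apply: reach_trans (IH Gg) _; rewrite -compmA.
apply: reach_step (reach_refl _ _).
by split; [apply: inG_compm | exists h2].
Qed.

Lemma Gstar_scc_reach (g a b : mmap D m) :
  Gstar omega g -> scc omega g a -> reach omega a b -> scc omega g b.
Proof.
case=> _ closed_g Sa Rab; elim: Rab Sa => // x y z Exy _ IH Sx.
exact/IH/(closed_g _ _ Sx Exy).
Qed.

Lemma Gstar_reach_back (g h : mmap D m) :
  Gstar omega g -> inG omega h -> reach omega (compm h g) g.
Proof.
move=> Gsg Gh; have Gg : inG omega g by case: Gsg.
have Sg : scc omega g g by split=> //; split; apply: reach_refl.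
by case: (Gstar_scc_reach Gsg Sg (reach_compm Gh Gg)) => _ [].
Qed.

End Reachability.

Lemma Omega_eq_coord (D : finType) (m : nat) (g : mmap D m) (x : tup D m)
    (i j : 'I_m) :
  Omega g -> x i = x j -> g x i = g x j.
Proof.
move=> Og xij.
have x_tperm : x = [ffun k => x (tperm i j k)].
  by apply/ffunP => k; rewrite ffunE; case: tpermP => [->|->|].
by rewrite [in LHS]x_tperm -Og tpermL.
Qed.

Lemma reach_eq_coord (D : finType) (m : nat) (omega : {ffun mmap D m -> rat})
    (a b : mmap D m) (y : tup D m) (i j : 'I_m) :
  (forall g, supp omega g -> Omega g) ->
  reach omega a b -> a y i = a y j -> b y i = b y j.
Proof.
move=> suppO; elim=> [//|a' b' c [_ [h [suph ->]]] _ IH] aij.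
by apply: IH; rewrite ffunE; apply: Omega_eq_coord aij; apply: suppO.
Qed.

Theorem proposition7p2 (D : finType) (m : nat) (hm : (2 <= m)%N)
    (Gamma : seq (costfun D)) (omega : {ffun mmap D m -> rat})
    (homega : is_omega Gamma omega)
    (xh : tup D m) (hxh : Range1 omega xh) (i j : 'I_m)
    (hx : exists x : tup D m, Gorbit omega xh x /\ x i = x j) :
  xh i = xh j.
Proof.
case: homega => _ suppO _.
case: hx => _ [[h [Gh ->]] hgij].
case: hxh hgij => g [y [Gsg ->]] hgij.
apply: (reach_eq_coord suppO (Gstar_reach_back Gsg Gh)).
by rewrite ffunE.
Qed.
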